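(* Let $\Phi=\Phi_{\vec p}$ be a Weyl channel, written as $\Phi=\frac1N\sum_{\mu=0}^{N^2-1}\lambda_\mu|U_\mu\rangle\rangle\langle\langle U_\mu|$, where $\lambda_{mn}=\sum_{k,l}H_{mn,kl}\,p_{kl}$ (so $\lambda_0=1$). Then $\Phi\in\mathcal{A}_N^Q$ if and only if there exists a choice of logarithms $\ell_\nu$ (complex numbers with $e^{\ell_\nu}=\lambda_\nu$, $\nu=1,\dots,N^2-1$) such that for every $\mu=1,\dots,N^2-1$ the number $$t_\mu=\frac1{N^2}\sum_{\nu=1}^{N^2-1}H_{\mu\nu}\,\ell_\nu$$ is real and non-negative. In that case $\Phi=\exp\big(\sum_{\mu=1}^{N^2-1}t_\mu\mathcal{L}_\mu\big)$.
   Context: Let $N\ge2$, $\omega=e^{2\pi i/N}$, $X|j\rangle=|j\oplus1\rangle$ (addition mod $N$), $Z=\mathrm{diag}(1,\omega,\dots,\omega^{N-1})$, Weyl unitaries $U_{kl}=X^kZ^l$, $k,l\in\{0,\dots,N-1\}$, also indexed by $\mu=Nk+l\in\{0,\dots,N^2-1\}$. Maps on $N\times N$ matrices are identified with superoperators acting on $|A\rangle\rangle=\sum_{ij}A_{ij}|i\rangle|j\rangle$ ($\rho\mapsto K\rho K^\dagger$ corresponds to $K\otimes\overline{K}$). A Weyl channel is $\Phi_{\vec p}=\sum_\mu p_\mu U_\mu\otimes\overline{U}_\mu$ with $\vec p$ a probability vector of length $N^2$. $H$ is the $N^2\times N^2$ matrix with entries $H_{mn,kl}=\omega^{ml-kn}$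 (rows indexed by $\mu=Nm+n$, columns by $\nu=Nk+l$). $\mathcal{L}_\mu=U_\mu\otimes\overline{U}_\mu-\mathbb{I}_{N^2}$, and $\mathcal{A}_N^Q$ is the set of superoperators $\exp(\sum_{\mu=1}^{N^2-1}t_\mu\mathcal{L}_\mu)$ with all $t_\mu\ge0$. *)

From HB Require Import structures.
From mathcomp Require Import all_boot all_order all_algebra.
From mathcomp Require Import all_classical all_reals.
From mathcomp Require Import topology normedtype sequences exp trigo.
From mathcomp Require Import complex.
From mathcomp Require mxtens.
Set Implicit Arguments.
Unset Strict Implicit.
Unset Printing Implicit Defensive.
Import Order.TTheory GRing.Theory Num.Theory.
Import numFieldNormedType.Exports.
Local Open Scope ring_scope.
Local Open Scope classical_set_scope.

Notation Cx R := (complex.complex R).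
Notation cRe := complex.Re.
Notation cIm := complex.Im.
Notation cconj := complex.conjc.

Section Weyl.
Variable R : realType.
Local Notation C := (Cx R).

Definition cR (x : R) : C := complex.Complex x 0.

Definition cexp (z : C) : C :=
  complex.Complex (expR (cRe z) * cos (cIm z)) (expR (cRe z) * sin (cIm z)).

Definition ccvg (u : nat -> C) (z : C) : Prop :=
  (fun n => cRe (u n) : R) @ \oo --> (cRe z : R) /\
  (fun n => cIm (u n) : R) @ \oo --> (cIm z : R).

Definition is_mexp (n : nat) (A B : 'M[C]_n) : Prop :=
  forall i j, ccvg (fun m => (\sum_(k < m) ((k`!)%:R)^-1 *: (A ^+ k)) i j) (B i j).

Variable N : nat.

Definition omega : C := cexp (complex.Complex 0 (2 * pi / N%:R)).

Definition shiftX : 'M[C]_N := \matrix_(i < N, j < N) ((i == (j.+1 %% N)%N :> nat)%:R).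

Definition clockZ : 'M[C]_N := \matrix_(i < N, j < N) ((i == j)%:R * omega ^+ i).

Definition weylU (kl : 'I_N * 'I_N) : 'M[C]_N := shiftX ^+ kl.1 *m clockZ ^+ kl.2.

(* superoperator of rho |-> K rho K^dagger, acting on |A>> = sum A_ij |i>|j> *)
Definition superop (K : 'M[C]_N) : 'M[C]_(N * N) :=
  mxtens.tensmx K (map_mx cconj K).

Definition weyl_channel (p : 'I_N * 'I_N -> R) : 'M[C]_(N * N) :=
  \sum_(mu : 'I_N * 'I_N) cR (p mu) *: superop (weylU mu).

Definition is_prob_vector (p : 'I_N * 'I_N -> R) : Prop :=
  (forall mu, 0 <= p mu) /\ \sum_(mu : 'I_N * 'I_N) p mu = 1.

(* H_{mn,kl} = omega^{ml - kn} (exponent taken mod N, as omega^N = 1) *)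
Definition Hmat (mn kl : 'I_N * 'I_N) : C :=
  omega ^+ ((mn.1 * kl.2 + (N - (kl.1 * mn.2) %% N)) %% N)%N.

Definition lambda (p : 'I_N * 'I_N -> R) (mn : 'I_N * 'I_N) : C :=
  \sum_(kl : 'I_N * 'I_N) Hmat mn kl * cR (p kl).

(* index mu = N k + l is zero iff k = l = 0 *)
Definition is_zero_idx (mu : 'I_N * 'I_N) : bool :=
  ((mu.1 : nat) == 0%N) && ((mu.2 : nat) == 0%N).

Definition Lgen (mu : 'I_N * 'I_N) : 'M[C]_(N * N) := superop (weylU mu) - 1%:M.

Definition in_AQ (Phi : 'M[C]_(N * N)) : Prop :=
  exists t : 'I_N * 'I_N -> R, (forall mu, ~~ is_zero_idx mu -> 0 <= t mu) /\
    is_mexp (\sum_(mu | ~~ is_zero_idx mu) cR (t mu) *: Lgen mu) Phi.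

Definition tcoef (l : 'I_N * 'I_N -> C) (mu : 'I_N * 'I_N) : C :=
  ((N ^ 2)%:R)^-1 * \sum_(nu | ~~ is_zero_idx nu) Hmat mu nu * l nu.

Definition good_logs (p : 'I_N * 'I_N -> R) (l : 'I_N * 'I_N -> C) : Prop :=
  (forall nu, ~~ is_zero_idx nu -> cexp (l nu) = lambda p nu) /\
  (forall mu, ~~ is_zero_idx mu -> cIm (tcoef l mu) = 0 /\ 0 <= cRe (tcoef l mu)).

End Weyl.

(* The vectorised Weyl matrices |U_c>> form an orthogonal basis of common
   eigenvectors of all superoperators U_mu (x) conj U_mu: conjugating U_c by U_mu only
   multiplies it by the root of unity H_{c,mu}.  In this basis the Weyl channel is diagonal
   with eigenvalues lambda_c, the generator L_mu with eigenvalues H_{c,mu} - 1, and the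
   exponential acts eigenvalue by eigenvalue.  Hence Phi = exp (sum_mu t_mu L_mu) exactly when
   l_c = sum_mu t_mu (H_{c,mu} - 1) is a logarithm of lambda_c for every c <> 0.  Character
   orthogonality gives H H = N^2 I, so t_mu = N^-2 sum_nu H_{mu,nu} l_nu inverts t |-> l. *)

From HB Require Import structures.
From mathcomp Require Import all_boot all_order all_algebra.
From mathcomp Require Import all_classical all_reals.
From mathcomp Require Import topology normedtype sequences exp trigo.
From mathcomp Require Import complex.
From mathcomp Require mxtens.
From mathcomp Require Import ring.
Set Implicit Arguments.
Unset Strict Implicit.
Unset Printing Implicit Defensive.
Import Order.TTheory GRing.Theory Num.Theory.
Import numFieldNormedType.Exports.
Local Open Scope ring_scope.
Local Open Scope classical_set_scope.

Section ExpSum.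
Variable F : numFieldType.
Implicit Types x y : F.

Definition expterm x k : F := (k`!%:R)^-1 * x ^+ k.

Definition expsum m x : F := \sum_(k < m) expterm x k.

Lemma sum_nat_triangle (V : zmodType) (g : nat -> nat -> V) m :
  \sum_(0 <= i < m) \sum_(0 <= j < (m - i)%N) g i j =
  \sum_(0 <= k < m) \sum_(0 <= i < k.+1) g i (k - i)%N.
Proof.
elim: m => [|m IHm]; first by rewrite !big_geq.
rewrite [RHS]big_nat_recr //= -IHm big_nat_recr //= subSnn big_nat1.
rewrite [in RHS]big_nat_recr // subnn addrA -big_split; congr (_ + _).
apply: eq_big_nat => i /andP[_ ltim].
by rewrite subSn 1?ltnW // big_nat_recr.
Qed.

Lemma exptermD x y k :
  expterm (x + y) k = \sum_(0 <= i < k.+1) expterm x i * expterm y (k - i)%N.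
Proof.
rewrite /expterm addrC exprDn big_distrr big_mkord; apply: eq_bigr => i _ /=.
have fact_neq0 j : (j`!%:R : F) != 0 by rewrite pnatr_eq0 -lt0n fact_gt0.
have binE : (k`!%:R)^-1 * 'C(k, i)%:R = (i`!%:R)^-1 * ((k - i)`!%:R : F)^-1.
  apply: (mulfI (fact_neq0 k)); rewrite mulrA mulfV // mul1r.
  rewrite -(bin_fact (ltnSE (ltn_ord i))) !natrM -mulrA mulrACA.
  by rewrite !mulfV ?mulr1.
rewrite -[_ *+ 'C(k, i)]mulr_natr.
transitivity ((k`!%:R)^-1 * 'C(k, i)%:R * (x ^+ i * y ^+ (k - i)%N)); first ring.
by rewrite binE; ring.
Qed.

Lemma expsumM m x y :
  expsum m x * expsum m y =
  \sum_(0 <= i < m) \sum_(0 <= j < m) expterm x i * expterm y j.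
Proof.
rewrite /expsum big_distrl big_mkord; apply: eq_bigr => i _.
by rewrite big_distrr big_mkord.
Qed.

Lemma expsumD m x y :
  expsum m (x + y) =
  \sum_(0 <= i < m) \sum_(0 <= j < (m - i)%N) expterm x i * expterm y j.
Proof.
rewrite sum_nat_triangle /expsum -(big_mkord xpredT (expterm (x + y))).
by apply: eq_big_nat => k _; rewrite exptermD.
Qed.

Lemma expsumM_subD m x y :
  expsum m x * expsum m y - expsum m (x + y) =
  \sum_(0 <= i < m) \sum_((m - i)%N <= j < m) expterm x i * expterm y j.
Proof.
rewrite expsumM expsumD -sumrB; apply: eq_big_nat => i _.
by rewrite (@big_cat_nat _ _ _ (m - i)) ?leq_subr // addrC addKr.
Qed.

Lemma norm_expsumM_subD m x y :
  `|expsum m x * expsum m y - expsum m (x + y)| <=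
  expsum m `|x| * expsum m `|y| - expsum m (`|x| + `|y|).
Proof.
rewrite !expsumM_subD; apply: (le_trans (ler_norm_sum _ _ _)).
apply: ler_sum => i _; apply: (le_trans (ler_norm_sum _ _ _)).
apply: ler_sum => j _.
by rewrite /expterm !normrM !normrX !normfV !normr_nat.
Qed.

End ExpSum.

Lemma expsum_cvg (R : realType) (a : R) : (fun m => expsum m a) @ \oo --> expR a.
Proof.
have -> : (fun m => expsum m a) = series (exp_coeff a).
  apply/funext => m; rewrite /series /expsum /= big_mkord.
  by apply: eq_bigr => k _; rewrite /expterm /exp_coeff /= mulrC.
exact: is_cvg_series_exp_coeff.
Qed.

Section ComplexExp.
Variable R : realType.
Local Notation C := (Cx R).
Implicit Types (a b : R) (z w : C).

Lemma cReD z w : cRe (z + w) = cRe z + cRe w. Proof. by case: z; case: w. Qed.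
Lemma cImD z w : cIm (z + w) = cIm z + cIm w. Proof. by case: z; case: w. Qed.
Lemma cReB z w : cRe (z - w) = cRe z - cRe w. Proof. by case: z; case: w. Qed.
Lemma cImB z w : cIm (z - w) = cIm z - cIm w. Proof. by case: z; case: w. Qed.

Lemma cReM z w : cRe (z * w) = cRe z * cRe w - cIm z * cIm w.
Proof. by case: z; case: w. Qed.

Lemma cImM z w : cIm (z * w) = cRe z * cIm w + cIm z * cRe w.
Proof. by case: z; case: w. Qed.

Lemma cRe_cRM a z : cRe (cR a * z) = a * cRe z.
Proof. by rewrite cReM /= mul0r subr0. Qed.

Lemma cIm_cRM a z : cIm (cR a * z) = a * cIm z.
Proof. by rewrite cImM /= mul0r addr0. Qed.

Lemma cRe_sum I r (P : pred I) (F : I -> C) :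
  cRe (\sum_(i <- r | P i) F i) = \sum_(i <- r | P i) cRe (F i).
Proof. exact: (raddf_sum (@complex.Re R : Rcomplex R -> R)). Qed.

Lemma cIm_sum I r (P : pred I) (F : I -> C) :
  cIm (\sum_(i <- r | P i) F i) = \sum_(i <- r | P i) cIm (F i).
Proof. exact: (raddf_sum (@complex.Im R : Rcomplex R -> R)). Qed.

Lemma cR_sum I r (P : pred I) (F : I -> R) :
  cR (\sum_(i <- r | P i) F i) = \sum_(i <- r | P i) cR (F i).
Proof. exact: (rmorph_sum (@real_complex R)). Qed.

Lemma conjc_natrM k z : cconj (k%:R * z) = k%:R * cconj z.
Proof. by rewrite rmorphM rmorph_nat. Qed.

Lemma cRE a : cR a = real_complex R a. Proof. by []. Qed.

Lemma cR_Re z : cIm z = 0 -> cR (cRe z) = z.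
Proof. by case: z => a b /= ->. Qed.

Lemma expsum_cR m a : expsum m (cR a) = cR (expsum m a).
Proof.
rewrite /expsum cR_sum; apply: eq_bigr => k _.
by rewrite /expterm !cRE rmorphM fmorphV rmorph_nat rmorphXn.
Qed.

Lemma expr_imag b k : (complex.Complex 0 b) ^+ k =
  complex.Complex ((~~ odd k)%:R * (-1) ^+ k./2 * b ^+ k)
                  ((odd k)%:R * (-1) ^+ k.-1./2 * b ^+ k).
Proof.
elim: k => [|k IHk]; first by rewrite expr0 /= !mulr1.
rewrite exprS IHk; case: k {IHk} => [|k] /=.
  by congr complex.Complex; rewrite !expr0 expr1; ring.
by case: (odd k); congr complex.Complex; rewrite /= !exprS; ring.
Qed.

Lemma cRe_expsum_imag m b :
  cRe (expsum m (complex.Complex 0 b)) = series (cos_coeff b) m.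
Proof.
rewrite /expsum cRe_sum /series /= big_mkord; apply: eq_bigr => k _; rewrite /expterm.
have -> : (k`!%:R : C)^-1 = cR (k`!%:R)^-1 by rewrite cRE fmorphV rmorph_nat.
by rewrite cRe_cRM expr_imag /= mulrC.
Qed.

Lemma cIm_expsum_imag m b :
  cIm (expsum m (complex.Complex 0 b)) = series (sin_coeff b) m.
Proof.
rewrite /expsum cIm_sum /series /= big_mkord; apply: eq_bigr => k _; rewrite /expterm.
have -> : (k`!%:R : C)^-1 = cR (k`!%:R)^-1 by rewrite cRE fmorphV rmorph_nat.
by rewrite cIm_cRM expr_imag /= mulrC.
Qed.

Lemma norm_cRe_cIm_le z B : `|z| <= cR B -> `|cRe z| <= B /\ `|cIm z| <= B.
Proof.
rewrite normc_def lecE /= => /andP[_ zB]; split; apply: le_trans zB;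
  rewrite -sqrtr_sqr ler_sqrt ?addr_ge0 ?sqr_ge0 //.
- by rewrite lerDl sqr_ge0.
- by rewrite lerDr sqr_ge0.
Qed.

Lemma norm_cR a : `|cR a| = cR `|a|.
Proof. by rewrite normc_def /= expr0n addr0 sqrtr_sqr. Qed.

Lemma norm_imag b : `|complex.Complex 0 b| = cR `|b|.
Proof. by rewrite normc_def /= expr0n add0r sqrtr_sqr. Qed.

Lemma ccvg_cst z : ccvg (fun=> z) z.
Proof. by split; apply: cvg_cst. Qed.

Lemma ccvgD u v z w : ccvg u z -> ccvg v w -> ccvg (fun m => u m + v m) (z + w).
Proof.
move=> [uRe uIm] [vRe vIm]; split.
- by under eq_fun do rewrite cReD; rewrite cReD; apply: cvgD.
- by under eq_fun do rewrite cImD; rewrite cImD; apply: cvgD.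
Qed.

Lemma ccvgB u v z w : ccvg u z -> ccvg v w -> ccvg (fun m => u m - v m) (z - w).
Proof.
move=> [uRe uIm] [vRe vIm]; split.
- by under eq_fun do rewrite cReB; rewrite cReB; apply: cvgB.
- by under eq_fun do rewrite cImB; rewrite cImB; apply: cvgB.
Qed.

Lemma ccvgMl w u z : ccvg u z -> ccvg (fun m => w * u m) (w * z).
Proof.
move=> [uRe uIm]; split.
- by under eq_fun do rewrite cReM; rewrite cReM; apply: cvgB; apply: cvgMl_tmp.
- by under eq_fun do rewrite cImM; rewrite cImM; apply: cvgD; apply: cvgMl_tmp.
Qed.

Lemma ccvgMr w u z : ccvg u z -> ccvg (fun m => u m * w) (z * w).
Proof. by move=> /(ccvgMl w); under eq_fun do rewrite mulrC; rewrite mulrC. Qed.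

Lemma ccvg_sum I r (P : pred I) (u : I -> nat -> C) (z : I -> C) :
  (forall i, ccvg (u i) (z i)) ->
  ccvg (fun m => \sum_(i <- r | P i) u i m) (\sum_(i <- r | P i) z i).
Proof.
move=> uz; elim: r => [|i r IHr].
  by under eq_fun do rewrite big_nil; rewrite big_nil; apply: ccvg_cst.
under eq_fun do rewrite big_cons; rewrite big_cons.
by case: (P i); [apply: ccvgD | ].
Qed.

Lemma ccvg_unique u z w : ccvg u z -> ccvg u w -> z = w.
Proof.
case: z w => [a b] [c d] [/= uRe uIm] [/= uRe' uIm'].
by congr complex.Complex; [exact: (cvg_unique _ uRe uRe') | exact: (cvg_unique _ uIm uIm')].
Qed.

Lemma ccvg_norm_bound u (B : nat -> R) :
  (forall m, `|u m| <= cR (B m)) -> B @ \oo --> 0 -> ccvg u 0.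
Proof.
move=> uB B0; have uB' m := norm_cRe_cIm_le (uB m).
have squeeze (v : nat -> R) : (forall m, `|v m| <= B m) -> v @ \oo --> 0.
  move=> vB; apply: (@squeeze_cvgr _ _ _ _ (fun m => - B m) B) => //.
  - by apply: nearW => m; rewrite -ler_norml.
  - by rewrite -oppr0; apply: cvgN.
by split; apply: squeeze => m; case: (uB' m).
Qed.

Lemma ccvg_expsum z : ccvg (fun m => expsum m z) (cexp z).
Proof.
case: z => a b.
have -> : cexp (complex.Complex a b) = cR (expR a) * complex.Complex (cos b) (sin b) - 0.
  by rewrite subr0 /cexp /cR; congr complex.Complex => /=; ring.
set x := cR a; set y := complex.Complex 0 b.
have -> : complex.Complex a b = x + y.
  by rewrite /x /y /cR; congr complex.Complex; rewrite ?addr0 ?add0r.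
(* The defect is the tail of the Cauchy product of the two series; it is dominated by the
   same tail at [|a|] and [|b|], which tends to [e^|a| e^|b| - e^(|a| + |b|) = 0]. *)
pose defect m := expsum m x * expsum m y - expsum m (x + y).
have defect0 : ccvg defect 0.
  apply: (@ccvg_norm_bound _ (fun m =>
    expsum m `|a| * expsum m `|b| - expsum m (`|a| + `|b|))).
  - move=> m; apply: le_trans (norm_expsumM_subD _ _ _) _.
    rewrite /x /y norm_cR norm_imag !cRE -rmorphD !expsum_cR !cRE.
    by rewrite -rmorphM -rmorphB.
  - rewrite -(subrr (expR (`|a| + `|b|))) [X in _ --> X - _]expRD.
    by apply: cvgB; first apply: cvgM; apply: expsum_cvg.
have -> : (fun m => expsum m (x + y)) = (fun m => expsum m x * expsum m y - defect m).
  by apply/funext => m; rewrite /defect subKr.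
apply: ccvgB defect0; rewrite /x; under eq_fun do rewrite expsum_cR.
split.
- under eq_fun do rewrite cRe_cRM cRe_expsum_imag; rewrite cRe_cRM /=.
  by apply: cvgM; [apply: expsum_cvg | rewrite unlock; apply: is_cvg_series_cos_coeff].
- under eq_fun do rewrite cIm_cRM cIm_expsum_imag; rewrite cIm_cRM /=.
  by apply: cvgM; [apply: expsum_cvg | rewrite unlock; apply: is_cvg_series_sin_coeff].
Qed.

Lemma cexp0 : cexp 0 = 1 :> C.
Proof. by rewrite /cexp /= expR0 cos0 sin0 mulr1 mulr0. Qed.

End ComplexExp.

Lemma cos_neq1 (R : realType) (x : R) : 0 < x -> x < pi *+ 2 -> cos x != 1.
Proof.
move=> x_gt0 x_lt2pi; apply/eqP => cosx1.
have pi_gt0 : 0 < pi :> R := pi_gt0 R.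
have [x_lepi|pi_ltx] := leP x pi.
  have := @cos_inj R x 0; rewrite cos0 cosx1 !in_itv /= lexx (ltW x_gt0) x_lepi.
  by rewrite ltW // => /(_ isT isT erefl) /eqP; rewrite gt_eqF.
have cos_sym : cos (pi *+ 2 - x) = 1 by rewrite addrC cosD2pi cosN.
have := @cos_inj R (pi *+ 2 - x) 0; rewrite cos0 cos_sym !in_itv /= lexx.
rewrite subr_ge0 (ltW x_lt2pi) lerBlDr mulr2n lerD2l (ltW pi_ltx) (ltW pi_gt0).
move=> /(_ isT isT erefl) /eqP; rewrite subr_eq0 -mulr2n => /eqP x2pi.
by rewrite x2pi ltxx in x_lt2pi.
Qed.

Section RootsOfUnity.
Variables (R : realType) (n : nat).
Local Notation C := (Cx R).
Local Notation N := n.+2.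
Local Notation omega := (omega R N).

Definition expi (t : R) : C := complex.Complex (cos t) (sin t).

Lemma expiD s t : expi s * expi t = expi (s + t).
Proof. by rewrite /expi cosD sinD /=; congr complex.Complex; rewrite addrC. Qed.

Lemma omega_exp k : omega ^+ k = expi (k%:R * (2 * pi / N%:R)).
Proof.
set theta := 2 * pi / N%:R.
elim: k => [|k IHk]; first by rewrite expr0 mul0r /expi cos0 sin0.
rewrite exprSr IHk -[k.+1]addn1 natrD mulrDl mul1r -expiD; congr (_ * _).
by rewrite /omega /cexp /expi /= expR0 !mul1r.
Qed.

Lemma omegaN : omega ^+ N = 1.
Proof.
rewrite omega_exp mulrC divfK ?pnatr_eq0 // mulr_natl.
by rewrite /expi cos2pi sin2pi.
Qed.

Lemma omega_modn k : omega ^+ (k %% N) = omega ^+ k.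
Proof. by rewrite {2}(divn_eq k N) exprD mulnC exprM omegaN expr1n mul1r. Qed.

Lemma omegaX_neq1 k : (0 < k < N)%N -> omega ^+ k != 1.
Proof.
move=> /andP[k_gt0 k_ltN]; rewrite omega_exp; apply/negP => /eqP /(congr1 (@complex.Re R)) /=.
apply/eqP/cos_neq1; first by rewrite mulr_gt0 ?divr_gt0 ?mulr_gt0 ?pi_gt0 ?ltr0n.
rewrite mulrA ltr_pdivrMr ?ltr0n // -(mulr_natl pi 2) [X in _ < X]mulrC.
by rewrite ltr_pM2r ?ltr_nat // mulr_gt0 ?pi_gt0.
Qed.

Lemma conjc_omega_mul : cconj omega * omega = 1.
Proof.
rewrite -[omega]expr1 omega_exp mul1r /expi /=; congr complex.Complex.
- by rewrite mulNr opprK -!expr2 cos2Dsin2.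
- by rewrite mulNr mulrC subrr.
Qed.

Definition chi (x : 'I_N) : C := omega ^+ x.

Lemma chiM (x y : 'I_N) : chi (x * y) = omega ^+ (x * y).
Proof. by rewrite /chi /= omega_modn. Qed.

Lemma chiD (x y : 'I_N) : chi (x + y) = chi x * chi y.
Proof. by rewrite /chi /= omega_modn exprD. Qed.

Lemma chi0 : chi 0 = 1.
Proof. by rewrite /chi expr0. Qed.

Lemma conjc_chi x : cconj (chi x) = chi (- x).
Proof.
have chiNx : chi (- x) * chi x = 1 by rewrite -chiD addNr chi0.
have conj_chix : cconj (chi x) * chi x = 1.
  by rewrite /chi rmorphXn -exprMn conjc_omega_mul expr1n.
by rewrite -[LHS]mulr1 -chiNx mulrCA conj_chix mulr1.
Qed.

Lemma sum_chiM (y : 'I_N) : \sum_(x : 'I_N) chi (x * y) = (y == 0)%:R * N%:R.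
Proof.
under eq_bigr do rewrite chiM mulnC exprM.
have [->|y_neq0] := eqVneq y 0.
  by under eq_bigr do rewrite expr0 expr1n; rewrite sumr_const card_ord mul1r.
have omegay_neq1 : omega ^+ y != 1.
  by apply: omegaX_neq1; rewrite ltn_ord andbT lt0n -(inj_eq val_inj) in y_neq0 *.
have : (omega ^+ y - 1) * \sum_(i < N) (omega ^+ y) ^+ i = 0.
  by rewrite -subrX1 -exprM mulnC exprM omegaN expr1n subrr.
by move=> /eqP; rewrite mul0r mulf_eq0 subr_eq0 (negPf omegay_neq1) => /eqP.
Qed.

End RootsOfUnity.

Lemma sum_delta (T : finType) (K : pzRingType) (F : T -> K) (c : T) :
  \sum_a (a == c)%:R * F a = F c.
Proof.
rewrite (bigD1 c) //= eqxx mul1r big1 ?addr0 // => a /negPf ->.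
by rewrite mul0r.
Qed.

Lemma sum_shift_delta (Z : finZmodType) (K : pzRingType) (F : Z -> K) (i k : Z) :
  \sum_a (i == a + k)%:R * F a = F (i - k).
Proof.
by rewrite -(sum_delta F (i - k)); apply: eq_bigr => a _; rewrite (eq_sym a) subr_eq.
Qed.

Section WeylOperators.
Variables (R : realType) (n : nat).
Local Notation C := (Cx R).
Local Notation N := n.+2.
Local Notation chi := (@chi R n).
Local Notation weylU := (weylU R (N := N)).

Lemma shiftXE (i j : 'I_N) : shiftX R N i j = (i == j + 1)%:R.
Proof.
have j1E : (j + 1 : 'I_N) = (j.+1 %% N)%N :> nat by rewrite /= (@modn_small 1) ?addn1.
by rewrite mxE -j1E.
Qed.

Lemma shiftX_expE k (i j : 'I_N) : (shiftX R N ^+ k) i j = (i == j + k%:R)%:R.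
Proof.
elim: k i j => [|k IHk] i j; first by rewrite expr0 mxE addr0.
rewrite exprSr -mulmxE mxE.
under eq_bigr do rewrite IHk shiftXE.
by rewrite sum_shift_delta subr_eq mulrS addrA.
Qed.

Lemma clockZ_expE l (i j : 'I_N) :
  (clockZ R N ^+ l) i j = (i == j)%:R * omega R N ^+ (i * l).
Proof.
elim: l i j => [|l IHl] i j; first by rewrite expr0 mxE muln0 expr0 mulr1.
rewrite exprSr -mulmxE mxE.
under eq_bigr do rewrite IHl mxE.
rewrite (bigD1 j) //= big1 ?addr0 => [|a /negPf ->]; last by rewrite mul0r mulr0.
case: eqP => [->|_]; last by rewrite !mul0r.
by rewrite eqxx !mul1r mulnS addnC exprD.
Qed.

Lemma weylUE (k l i j : 'I_N) : weylU (k, l) i j = (i == j + k)%:R * chi (j * l).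
Proof.
rewrite /weylU mxE /=.
under eq_bigr do rewrite shiftX_expE clockZ_expE natr_Zp.
rewrite sum_shift_delta subr_eq; case: eqP => [->|_]; last by rewrite !mul0r.
by rewrite addrK chiM.
Qed.

Lemma HmatE (mn kl : 'I_N * 'I_N) : Hmat R mn kl = chi (mn.1 * kl.2 - kl.1 * mn.2).
Proof.
rewrite /Hmat /chi /= omega_modn [RHS]omega_modn !exprD omega_modn.
by rewrite (omega_modn _ _ (N - _)).
Qed.

Lemma weylU_orthogonal (c c' : 'I_N * 'I_N) :
  \sum_i \sum_j cconj (weylU c i j) * weylU c' i j = (c == c')%:R * N%:R.
Proof.
case: c c' => [k l] [k' l']; rewrite exchange_big /=.
under eq_bigr => j _.
  under eq_bigr => i _ do rewrite !weylUE conjc_natrM mulrAC -mulrA.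
  rewrite sum_delta (inj_eq (addrI _)) conjc_chi -mulrA -chiD -mulrN -mulrDr.
  over.
rewrite xpair_eqE; have [_|_] /= := eqVneq k k'; last first.
  by rewrite mul0r big1 // => j _; rewrite mul0r.
under eq_bigr do rewrite mul1r.
by rewrite sum_chiM subr_eq0 (eq_sym l).
Qed.

(* Entrywise form of U_mu U_c U_mu^dagger = H_{c,mu} U_c. *)
Lemma weylU_conj_eigen (mu c : 'I_N * 'I_N) (i j : 'I_N) :
  \sum_a \sum_b weylU mu i a * cconj (weylU mu j b) * weylU c a b =
  Hmat R c mu * weylU c i j.
Proof.
case: mu c => [k l] [m q].
have termE a b : weylU (k, l) i a * cconj (weylU (k, l) j b) * weylU (m, q) a b =
    (i == a + k)%:R * ((j == b + k)%:R *
      (chi (a * l) * chi (- (b * l)) * ((a == b + m)%:R * chi (b * q)))).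
  by rewrite !weylUE conjc_natrM conjc_chi; ring.
under eq_bigr => a _ do under eq_bigr => b _ do rewrite termE.
under eq_bigr => a _ do rewrite -big_distrr.
rewrite sum_shift_delta sum_shift_delta /= HmatE weylUE /= subr_eq addrAC subrK.
case: eqP => [->|_]; last by rewrite !(mul0r, mulr0).
by rewrite !mul1r -!chiD; congr chi; ring.
Qed.

End WeylOperators.

Section MatrixExp.
Variables (R : realType) (m : nat).
Local Notation C := (Cx R).
Implicit Types A B : 'M[C]_m.

Lemma mexp_unique A B1 B2 : is_mexp A B1 -> is_mexp A B2 -> B1 = B2.
Proof. by move=> AB1 AB2; apply/matrixP => r s; apply: ccvg_unique (AB1 r s) (AB2 r s). Qed.

Lemma diag_mx_exp (d : 'rV[C]_m) k :
  diag_mx d ^+ k = diag_mx (map_mx (fun x => x ^+ k) d).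
Proof.
elim: k => [|k IHk].
  by rewrite expr0; apply/matrixP => i j; rewrite !mxE expr0.
rewrite exprSr IHk -mulmxE mulmx_diag; apply: f_equal.
by apply/matrixP => i j; rewrite !mxE (ord1 i) exprSr.
Qed.

Lemma mexp_diag (d : 'rV[C]_m) : is_mexp (diag_mx d) (diag_mx (map_mx (@cexp R) d)).
Proof.
move=> i j; rewrite !mxE.
under eq_fun do rewrite summxE.
under eq_fun do under eq_bigr do rewrite diag_mx_exp !mxE.
have [_|_] := eqVneq i j.
  rewrite mulr1n; under eq_fun do under eq_bigr do rewrite mulr1n.
  exact: ccvg_expsum.
rewrite mulr0n; under eq_fun do under eq_bigr do rewrite mulr0n mulr0.
by under eq_fun do rewrite big1 //; apply: ccvg_cst.
Qed.

Section Conjugation.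
Variables P Q : 'M[C]_m.
Hypothesis QP : Q *m P = 1%:M.

Lemma conjmxX A k : (P *m A *m Q) ^+ k = P *m A ^+ k *m Q.
Proof.
elim: k => [|k IHk].
  by rewrite !expr0 mulmx1 mulmx1C.
rewrite exprSr IHk [in RHS]exprSr -!mulmxE !mulmxA.
by rewrite -(mulmxA _ Q P) QP mulmx1.
Qed.

Lemma mexp_conj A B : is_mexp A B -> is_mexp (P *m A *m Q) (P *m B *m Q).
Proof.
move=> AB r s.
have sumE k : \sum_(i < k) (i`!%:R)^-1 *: (P *m A *m Q) ^+ i =
    P *m (\sum_(i < k) (i`!%:R)^-1 *: A ^+ i) *m Q.
  rewrite mulmx_sumr mulmx_suml; apply: eq_bigr => i _.
  by rewrite conjmxX scalemxAl scalemxAr.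
under eq_fun do rewrite sumE !mxE.
rewrite !mxE; apply: ccvg_sum => u; apply: ccvgMr.
rewrite mxE; under eq_fun do rewrite mxE.
by apply: ccvg_sum => t; apply: ccvgMl.
Qed.

End Conjugation.
End MatrixExp.

Section WeylBasis.
Variables (R : realType) (n : nat).
Local Notation C := (Cx R).
Local Notation N := n.+2.
Local Notation L := ('I_N * 'I_N)%type.
Local Notation NN := (N * N)%N.
Local Notation weylU := (weylU R (N := N)).
Local Notation pair_of := (@mxtens.mxtens_unindex N N).
Local Notation index_of := (@mxtens.mxtens_index N N).

(* Column [s] is the vectorisation |U_c>> of the Weyl matrix [c = pair_of s], with the
   index ordering of [superop]. *)
Definition weyl_basis : 'M[C]_NN :=
  \matrix_(r, s) weylU (pair_of s) (pair_of r).1 (pair_of r).2.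

Definition weyl_basis_inv : 'M[C]_NN :=
  \matrix_(r, s) (N%:R^-1 * cconj (weylU (pair_of r) (pair_of s).1 (pair_of s).2)).

Lemma weyl_basisE r s : weyl_basis r s = weylU (pair_of s) (pair_of r).1 (pair_of r).2.
Proof. by rewrite mxE. Qed.

Lemma weyl_basis_invE r s :
  weyl_basis_inv r s = N%:R^-1 * cconj (weylU (pair_of r) (pair_of s).1 (pair_of s).2).
Proof. by rewrite mxE. Qed.

Lemma sum_mxtens_index (F : 'I_NN -> C) :
  \sum_r F r = \sum_(i : 'I_N) \sum_(j : 'I_N) F (index_of (i, j)).
Proof.
rewrite (reindex index_of) /=; last first.
  by exists pair_of => x _; [apply: mxtens.mxtens_indexK | apply: mxtens.mxtens_unindexK].
by rewrite pair_big /=; apply: eq_bigr => -[i j].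
Qed.

Lemma weyl_basis_invK : weyl_basis_inv *m weyl_basis = 1%:M.
Proof.
apply/matrixP => r s; rewrite [LHS]mxE [RHS]mxE sum_mxtens_index.
under eq_bigr do under eq_bigr do
  rewrite weyl_basis_invE weyl_basisE mxtens.mxtens_indexK -mulrA.
under eq_bigr do rewrite -big_distrr.
rewrite -big_distrr weylU_orthogonal (inj_eq (can_inj (@mxtens.mxtens_unindexK N N))).
by rewrite /= mulrCA mulVf ?pnatr_eq0 // mulr1.
Qed.

Lemma weyl_basisK : weyl_basis *m weyl_basis_inv = 1%:M.
Proof. exact: mulmx1C weyl_basis_invK. Qed.

Definition weyl_diag (f : L -> C) : 'M[C]_NN :=
  weyl_basis *m diag_mx (\row_r f (pair_of r)) *m weyl_basis_inv.

Lemma weyl_diagE f r s :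
  weyl_diag f r s = \sum_t weyl_basis r t * f (pair_of t) * weyl_basis_inv t s.
Proof. by rewrite mxE; apply: eq_bigr => t _; rewrite mul_mx_diag !mxE. Qed.

Lemma weyl_diag_sum (I : finType) (P : pred I) (F : I -> L -> C) :
  weyl_diag (fun c => \sum_(i | P i) F i c) = \sum_(i | P i) weyl_diag (F i).
Proof.
apply/matrixP => r s; rewrite summxE weyl_diagE.
under [RHS]eq_bigr do rewrite weyl_diagE.
rewrite exchange_big; apply: eq_bigr => t _.
by rewrite big_distrr big_distrl.
Qed.

Lemma weyl_diagZ a f : weyl_diag (fun c => a * f c) = a *: weyl_diag f.
Proof.
apply/matrixP => r s; rewrite [RHS]mxE !weyl_diagE big_distrr /=.
by apply: eq_bigr => t _; rewrite mulrCA !mulrA.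
Qed.

Lemma weyl_diagB f g : weyl_diag (fun c => f c - g c) = weyl_diag f - weyl_diag g.
Proof.
apply/matrixP => r s; rewrite [RHS]mxE [X in _ + X]mxE !weyl_diagE -sumrB.
by apply: eq_bigr => t _; rewrite mulrBr mulrBl.
Qed.

Lemma weyl_diag1 : weyl_diag (fun=> 1) = 1%:M.
Proof.
rewrite /weyl_diag (_ : \row_r _ = const_mx 1); last by apply/matrixP => i j; rewrite !mxE.
by rewrite diag_const_mx mulmx1 weyl_basisK.
Qed.

Lemma weyl_diag_inj f g : weyl_diag f = weyl_diag g -> f =1 g.
Proof.
have diagE h : weyl_basis_inv *m weyl_diag h *m weyl_basis = diag_mx (\row_r h (pair_of r)).
  by rewrite /weyl_diag !mulmxA weyl_basis_invK mul1mx -mulmxA weyl_basis_invK mulmx1.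
move=> fg c; move: (diagE f); rewrite fg diagE => /matrixP /(_ (index_of c) (index_of c)).
by rewrite !mxE eqxx !mulr1n mxtens.mxtens_indexK.
Qed.

Lemma mexp_weyl_diag f : is_mexp (weyl_diag f) (weyl_diag (fun c => cexp (f c))).
Proof.
rewrite /weyl_diag.
have -> : \row_r cexp (f (pair_of r)) = map_mx (@cexp R) (\row_r f (pair_of r)) :> 'rV_NN.
  by apply/matrixP => i j; rewrite !mxE.
by apply: (mexp_conj weyl_basis_invK); apply: mexp_diag.
Qed.

Lemma superop_weylU mu : superop (weylU mu) = weyl_diag (fun c => Hmat R c mu).
Proof.
have eigen : superop (weylU mu) *m weyl_basis =
    weyl_basis *m diag_mx (\row_r Hmat R (pair_of r) mu).
  apply/matrixP => r s; rewrite mul_mx_diag [LHS]mxE [RHS]mxE [X in _ * X]mxE.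
  case: (mxtens.mxtens_indexP r) => i j; rewrite weyl_basisE sum_mxtens_index.
  under eq_bigr do under eq_bigr do
    rewrite mxtens.tensmxE [map_mx _ _ _ _]mxE weyl_basisE mxtens.mxtens_indexK.
  by rewrite mxtens.mxtens_indexK weylU_conj_eigen mulrC.
by rewrite /weyl_diag -eigen -mulmxA weyl_basisK mulmx1.
Qed.

End WeylBasis.

Section WeylSemigroup.
Variables (R : realType) (n : nat).
Local Notation C := (Cx R).
Local Notation N := n.+2.
Local Notation L := ('I_N * 'I_N)%type.
Local Notation chi := (@chi R n).

Lemma is_zero_idxE (mu : L) : is_zero_idx mu = (mu == (0, 0)).
Proof. by case: mu => a b; rewrite /is_zero_idx xpair_eqE. Qed.

Lemma Hmat0r (c : L) : Hmat R c (0, 0) = 1.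
Proof. by rewrite HmatE /= mulr0 mul0r subr0 chi0. Qed.

Lemma Hmat0l (mu : L) : Hmat R (0, 0) mu = 1.
Proof. by rewrite HmatE /= mulr0 mul0r subr0 chi0. Qed.

Lemma Hmat_orthogonal (mu ka : L) :
  \sum_(nu : L) Hmat R mu nu * Hmat R nu ka = (mu == ka)%:R * (N * N)%:R.
Proof.
case: mu ka => [a b] [c e].
rewrite -(pair_big xpredT xpredT (fun k l => Hmat R (a, b) (k, l) * Hmat R (k, l) (c, e))) /=.
have termE k l : Hmat R (a, b) (k, l) * Hmat R (k, l) (c, e) =
    chi (k * (e - b)) * chi (l * (a - c)).
  by rewrite !HmatE /= -!chiD; congr chi; ring.
under eq_bigr do under eq_bigr do rewrite termE.
under eq_bigr do rewrite -big_distrr /= sum_chiM.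
rewrite -big_distrl /= sum_chiM xpair_eqE !subr_eq0 (eq_sym e) natrM.
by case: (a == c); case: (b == e); rewrite ?mul0r ?mulr0 ?mul1r.
Qed.

Lemma sum_Hmat (mu : L) : \sum_(nu : L) Hmat R mu nu = (mu == (0, 0))%:R * (N * N)%:R.
Proof. by rewrite -Hmat_orthogonal; apply: eq_bigr => nu _; rewrite Hmat0r mulr1. Qed.

Definition gen_eigenvalue (t : L -> C) (c : L) : C :=
  \sum_(mu | ~~ is_zero_idx mu) t mu * (Hmat R c mu - 1).

Lemma sum_Lgen (t : L -> C) :
  \sum_(mu | ~~ is_zero_idx mu) t mu *: Lgen R mu = weyl_diag (gen_eigenvalue t).
Proof.
rewrite weyl_diag_sum; apply: eq_bigr => mu _.
by rewrite /Lgen superop_weylU -weyl_diag1 -weyl_diagB -weyl_diagZ.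
Qed.

Lemma gen_eigenvalue0 t : gen_eigenvalue t (0, 0) = 0.
Proof. by rewrite /gen_eigenvalue big1 // => mu _; rewrite Hmat0l subrr mulr0. Qed.

(* [tcoef l] never reads [l (0, 0)], whereas [gen_eigenvalue t] always vanishes there. *)
Definition extend_by0 (l : L -> C) (c : L) : C := if is_zero_idx c then 0 else l c.

Lemma NN_neq0 : (N * N)%:R != 0 :> C.
Proof. by rewrite pnatr_eq0 muln_eq0. Qed.

Lemma tcoefE l mu :
  tcoef l mu = (N * N)%:R^-1 * \sum_(nu : L) Hmat R mu nu * extend_by0 l nu.
Proof.
rewrite /tcoef mulnn; congr (_ * _); rewrite big_mkcond; apply: eq_bigr => nu _.
by rewrite /extend_by0; case: is_zero_idx; rewrite ?mulr0.
Qed.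

Lemma sum_tcoef_Hmat l c : \sum_(mu : L) tcoef l mu * Hmat R c mu = extend_by0 l c.
Proof.
under eq_bigr do rewrite tcoefE -mulrA big_distrl /=.
rewrite -big_distrr /= exchange_big /=.
under eq_bigr => nu _ do under eq_bigr => mu _ do
  rewrite mulrAC mulrC (mulrC (Hmat R mu nu)).
under eq_bigr do rewrite -big_distrr /= Hmat_orthogonal.
rewrite (bigD1 c) //= eqxx big1 ?addr0 => [|nu]; last first.
  by rewrite eq_sym => /negPf ->; rewrite mul0r mulr0.
by rewrite mul1r mulrCA mulVf ?NN_neq0 ?mulr1.
Qed.

Lemma gen_eigenvalue_tcoef l : gen_eigenvalue (tcoef l) =1 extend_by0 l.
Proof.
move=> c; rewrite /gen_eigenvalue big_rmcond /=; last first.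
  by move=> mu; rewrite negbK is_zero_idxE => /eqP ->; rewrite Hmat0r subrr mulr0.
under eq_bigr do rewrite mulrBr mulr1.
rewrite sumrB sum_tcoef_Hmat.
have -> : \sum_(mu : L) tcoef l mu = extend_by0 l (0, 0).
  by rewrite -sum_tcoef_Hmat; apply: eq_bigr => mu _; rewrite Hmat0l mulr1.
by rewrite /extend_by0 /= subr0.
Qed.

Lemma tcoef_gen_eigenvalue t mu : ~~ is_zero_idx mu -> tcoef (gen_eigenvalue t) mu = t mu.
Proof.
move=> mu_neq0; rewrite tcoefE.
have extE nu : extend_by0 (gen_eigenvalue t) nu = gen_eigenvalue t nu.
  by rewrite /extend_by0 is_zero_idxE; case: eqP => // ->; rewrite gen_eigenvalue0.
under eq_bigr do rewrite extE /gen_eigenvalue big_distrr /=.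
rewrite exchange_big /=.
have innerE ka : \sum_nu Hmat R mu nu * (t ka * (Hmat R nu ka - 1)) =
    t ka * ((mu == ka)%:R * (N * N)%:R).
  rewrite is_zero_idxE in mu_neq0.
  transitivity (t ka * ((mu == ka)%:R * (N * N)%:R - (mu == (0, 0))%:R * (N * N)%:R)).
    rewrite -Hmat_orthogonal -sum_Hmat -sumrB big_distrr.
    by apply: eq_bigr => nu _ /=; ring.
  by rewrite (negPf mu_neq0) mul0r subr0.
under eq_bigr do rewrite innerE.
rewrite (bigD1 mu) //= eqxx big1 ?addr0 => [|ka /andP[_ ka_neq_mu]]; last first.
  by rewrite eq_sym (negPf ka_neq_mu) mul0r mulr0.
by rewrite mul1r mulrCA mulVf ?NN_neq0 ?mulr1.
Qed.

Lemma weyl_channelE (p : L -> R) : weyl_channel p = weyl_diag (lambda p).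
Proof.
rewrite /weyl_channel /lambda weyl_diag_sum; apply: eq_bigr => mu _.
by rewrite superop_weylU -weyl_diagZ; congr (weyl_diag _); apply/funext => c; rewrite mulrC.
Qed.

Lemma lambda0 (p : L -> R) : is_prob_vector p -> lambda p (0, 0) = 1.
Proof.
case=> _ p_sum1; rewrite /lambda.
under eq_bigr do rewrite Hmat0l mul1r.
by rewrite -cR_sum p_sum1.
Qed.

Lemma good_logs_mexp (p : L -> R) (l : L -> C) : is_prob_vector p -> good_logs p l ->
  is_mexp (\sum_(mu | ~~ is_zero_idx mu) cR (cRe (tcoef l mu)) *: Lgen R mu)
          (weyl_channel p).
Proof.
move=> p_prob [expl t_real].
have -> : \sum_(mu | ~~ is_zero_idx mu) cR (cRe (tcoef l mu)) *: Lgen R mu =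
    weyl_diag (extend_by0 l).
  rewrite (_ : extend_by0 l = gen_eigenvalue (tcoef l)); last first.
    by apply/funext => c; rewrite gen_eigenvalue_tcoef.
  rewrite -sum_Lgen; apply: eq_bigr => mu mu_neq0.
  by rewrite cR_Re //; case: (t_real mu mu_neq0).
rewrite weyl_channelE (_ : lambda p = fun c => cexp (extend_by0 l c)).
  exact: mexp_weyl_diag.
apply/funext => c; rewrite /extend_by0; case: ifP => [|c_neq0]; last by rewrite expl ?c_neq0.
by rewrite is_zero_idxE => /eqP ->; rewrite lambda0 // cexp0.
Qed.

Lemma in_AQ_good_logs (p : L -> R) : in_AQ (weyl_channel p) -> exists l, good_logs p l.
Proof.
case=> t [t_ge0 texp]; rewrite (sum_Lgen (fun mu => cR (t mu))) in texp.
have := mexp_unique texp (mexp_weyl_diag _).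
rewrite weyl_channelE => /weyl_diag_inj lambdaE.
exists (gen_eigenvalue (fun mu => cR (t mu))); split => [nu _|mu mu_neq0].
  by rewrite lambdaE.
by rewrite tcoef_gen_eigenvalue //; split => //; apply: t_ge0.
Qed.

End WeylSemigroup.

Theorem theorem1 (R : realType) (N : nat) (hN : (2 <= N)%N)
  (p : 'I_N * 'I_N -> R) (hp : is_prob_vector p) :
  (in_AQ (weyl_channel p) <-> exists l : 'I_N * 'I_N -> Cx R, good_logs p l) /\
  (forall l : 'I_N * 'I_N -> Cx R, good_logs p l ->
     is_mexp (\sum_(mu | ~~ is_zero_idx mu)
                cR (cRe (tcoef l mu)) *: Lgen R mu) (weyl_channel p)).
Proof.
case: N hN p hp => [|[|n]] // _ p hp.
split; last by move=> l; apply: good_logs_mexp.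
split; first exact: in_AQ_good_logs.
case=> l logs; exists (fun mu => cRe (tcoef l mu)); split; last exact: good_logs_mexp.
by move=> mu /logs.2 [].
Qed.
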